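(* Let $\lambda>0$ and $g_l^*>0$. Let $I$ be a finite instance set with real gradients $g_i$, and let $I_f=\{i\in I: |g_i|>g_l^*\}$ and $I_f^c=I\setminus I_f$; assume $I_f\neq\emptyset$. Let $p=\frac{|I_f|}{|I|}$ and $\bar g_f=\frac{\sum_{i\in I_f}g_i}{|I_f|}$. With the leaf value $V(J)=-\frac{\sum_{i\in J}g_i}{|J|+\lambda}$ for finite sets $J$, define $\xi_I=|V(I)-V(I_f^c)|$. Then $\xi_I\le p\,(|\bar g_f|+g_l^* )$.
   Context: $I_f$ is the set of instances removed by gradient-based data filtering with threshold $g_l^*$ (instances whose gradient has absolute value exceeding $g_l^*$), and $I_f^c$ is the set of remaining instances. *)

From mathcomp Require Import all_boot all_order all_algebra.
Set Implicit Arguments. Unset Strict Implicit. Unset Printing Implicit Defensive.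
Import Order.TTheory GRing.Theory Num.Theory.
Local Open Scope ring_scope.

Definition leaf_value (R : realFieldType) (T : finType) (g : T -> R)
  (lambda : R) (J : {set T}) : R :=
  - (\sum_(i in J) g i) / (#|J|%:R + lambda).

Definition filtered_set (R : realFieldType) (T : finType) (g : T -> R)
  (gl : R) (I : {set T}) : {set T} :=
  [set i in I | gl < `|g i|].

From mathcomp Require Import all_boot all_order all_algebra.
From mathcomp Require Import ring lra.
Import Order.TTheory GRing.Theory Num.Theory.
Local Open Scope ring_scope.

(* For A a subset of I with complement B = I \ A one has the exact identity
   V(I) - V(B) = -(sum_A g + |A| V(B)) / (|I| + lambda).
   If every gradient in B is bounded by c then |V(B)| <= c, and dropping
   lambda from the denominator gives
   |V(I) - V(B)| <= (|sum_A g| + |A| c) / |I| = p (|mean_A g| + c).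
   Gradient filtering is the case A = I_f, c = g_l^*. *)

Section LeafValue.

Variables (R : realFieldType) (T : finType) (g : T -> R) (lambda : R).
Hypothesis lambda_gt0 : 0 < lambda.

Lemma leaf_denom_gt0 (J : {set T}) : 0 < #|J|%:R + lambda.
Proof. by rewrite ltr_wpDl. Qed.

Lemma norm_sum_le_card (J : {set T}) (c : R) :
  {in J, forall i, `|g i| <= c} -> `|\sum_(i in J) g i| <= #|J|%:R * c.
Proof.
move=> gJ; apply: le_trans (ler_norm_sum _ _ _) _.
by rewrite mulr_natl -sumr_const; apply: ler_sum.
Qed.

Lemma norm_leaf_value_le (J : {set T}) (c : R) :
  0 <= c -> {in J, forall i, `|g i| <= c} -> `|leaf_value g lambda J| <= c.
Proof.
move=> c0 /norm_sum_le_card gJ.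
rewrite /leaf_value normrM normrN normfV (gtr0_norm (leaf_denom_gt0 J)).
rewrite ler_pdivrMr ?leaf_denom_gt0 // mulrDr mulrC.
by apply: le_trans gJ _; rewrite lerDl mulr_ge0 // ltW.
Qed.

Lemma leaf_value_setD (A I : {set T}) : A \subset I ->
  leaf_value g lambda I - leaf_value g lambda (I :\: A)
  = - (\sum_(i in A) g i + #|A|%:R * leaf_value g lambda (I :\: A))
      / (#|I|%:R + lambda).
Proof.
move=> AI; have IA : I :&: A = A by apply/setIidPr.
rewrite /leaf_value (big_setID A) -(cardsID A I) /= IA natrD.
have dB := leaf_denom_gt0 (I :\: A); have kA := ler0n R #|A|.
by field; rewrite !gt_eqF //; lra.
Qed.

Lemma norm_leaf_value_setD_le (A I : {set T}) (c : R) :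
  A \subset I -> A != set0 -> 0 <= c -> {in I :\: A, forall i, `|g i| <= c} ->
  `|leaf_value g lambda I - leaf_value g lambda (I :\: A)|
    <= #|A|%:R / #|I|%:R * (`|(\sum_(i in A) g i) / #|A|%:R| + c).
Proof.
move=> AI A0 c0 /(norm_leaf_value_le _ _ c0) Vc.
rewrite leaf_value_setD // normrM normrN normfV (gtr0_norm (leaf_denom_gt0 I)).
set S := \sum_(i in A) g i.
have kA : 0 < #|A|%:R :> R by rewrite ltr0n card_gt0.
have kI : #|A|%:R <= #|I|%:R :> R by rewrite ler_nat subset_leq_card.
have nI : 0 < #|I|%:R :> R by exact: lt_le_trans kI.
have -> : #|A|%:R / #|I|%:R * (`|S / #|A|%:R| + c) = (`|S| + #|A|%:R * c) / #|I|%:R.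
  by rewrite normrM normfV (gtr0_norm kA); field; rewrite !gt_eqF.
apply: ler_pM; rewrite ?invr_ge0 ?(ltW (leaf_denom_gt0 _)) //.
- apply: le_trans (ler_normD _ _) _; rewrite lerD2l normrM ger0_norm ?ler0n //.
  exact: ler_wpM2l.
- by rewrite lef_pV2 ?posrE ?leaf_denom_gt0 // lerDl ltW.
Qed.

End LeafValue.

Lemma filtered_setS (R : realFieldType) (T : finType) (g : T -> R) gl
    (I : {set T}) :
  filtered_set g gl I \subset I.
Proof. by apply/subsetP => i; rewrite inE => /andP[]. Qed.

Lemma norm_le_setD_filtered (R : realFieldType) (T : finType) (g : T -> R) gl
    (I : {set T}) :
  {in I :\: filtered_set g gl I, forall i, `|g i| <= gl}.
Proof. by move=> i; rewrite !inE => /andP[+ iI]; rewrite iI -leNgt. Qed.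

Theorem theorem5 (R : realFieldType) (T : finType) (g : T -> R)
  (lambda gl : R) (I : {set T}) :
  0 < lambda -> 0 < gl ->
  filtered_set g gl I != set0 ->
  let If := filtered_set g gl I in
  let Ifc := I :\: If in
  let p := #|If|%:R / #|I|%:R in
  let gbar := (\sum_(i in If) g i) / #|If|%:R in
  `|leaf_value g lambda I - leaf_value g lambda Ifc| <= p * (`|gbar| + gl).
Proof.
move=> lambda_gt0 gl_gt0 If_neq0 /=.
apply: norm_leaf_value_setD_le => //.
- exact: filtered_setS.
- exact: ltW.
- exact: norm_le_setD_filtered.
Qed.
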